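(* Let $m\ge2$, let $\mathbb{A}=(a_{i_1\ldots i_m})$ be a nonnegative tensor of order $m$ and dimension $n$, and let $\mathbb{B}=(b_{i_1\ldots i_{m+1}})$ be the nonnegative tensor of order $m+1$ and dimension $n$ with $b_{i_1\ldots i_mi_{m+1}}=a_{i_1\ldots i_m}$ if $i_{m+1}=i_m$ and $b_{i_1\ldots i_mi_{m+1}}=0$ otherwise. Then (i) for every $j\in[n]$, $\mathbb{A}$ is $j$-primitive if and only if $\mathbb{B}$ is $j$-primitive, and in that case $\gamma_j(\mathbb{B})=\gamma_j(\mathbb{A})$; (ii) $\mathbb{A}$ is primitive if and only if $\mathbb{B}$ is primitive, and then $\gamma(\mathbb{B})=\gamma(\mathbb{A})$.
   Context: General product of dimension-$n$ tensors: for $\mathbb{A}$ of order $m\ge2$ and $\mathbb{C}$ of order $k\ge1$, $(\mathbb{A}\mathbb{C})_{i\alpha_1\ldots\alpha_{m-1}}=\sum_{i_2,\ldots,i_m=1}^n a_{ii_2\ldots i_m}c_{i_2\alpha_1}\cdots c_{i_m\alpha_{m-1}}$ ($\alpha_l\in[n]^{k-1}$); it is associative and $\mathbb{A}^k$ denotes the $k$-fold power. The majorization matrix is $(M(\mathbb{C}))_{ij}=c_{ij\ldots j}$. A nonnegative tensor $\mathbb{A}$ is primitive if $M(\mathbb{A}^r)>0$ entrywise for some $r\ge1$, and the least such $r$ is $\gamma(\mathbb{A})$. For $j\in[n]$, $\mathbb{A}$ is $j$-primitive if there is $k\ge1$ with $(M(\mathbb{A}^k))_{uj}>0$ for all $u\in[n]$;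 the least such $k$ is $\gamma_j(\mathbb{A})$. *)

From mathcomp Require Import all_boot all_order all_algebra.
Set Implicit Arguments. Unset Strict Implicit. Unset Printing Implicit Defensive.
Import Order.TTheory GRing.Theory Num.Theory.
Local Open Scope ring_scope.

(* A tensor of dimension n with entries in R is represented by its entry
   function on index sequences  [:: i_1; ...; i_k]  (i_l : 'I_n); its order k
   is carried separately (only sequences of length k are meaningful). *)
Definition tensor (R : Type) (n : nat) := seq 'I_n -> R.

(* General product: A of order m, C of order k;
   (AC)_{i alpha_1 ... alpha_{m-1}} =
      sum_{i_2..i_m} a_{i i_2..i_m} c_{i_2 alpha_1} ... c_{i_m alpha_{m-1}},
   where alpha_l is the l-th block of length k-1 of the tail of the index. *)
Definition tmul (R : realFieldType) (n m k : nat) (A C : tensor R n) : tensor R n :=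
  fun s => match s with
  | [::] => 0
  | i :: rest =>
      \sum_(t : (m.-1).-tuple 'I_n)
        A (i :: t) *
        \prod_(l < m.-1) C (tnth t l :: take k.-1 (drop (l * k.-1) rest))
  end.

(* tpow_aux m A r = A^(r+1), whose order is (m-1)^(r+1) + 1. *)
Fixpoint tpow_aux (R : realFieldType) (n m : nat) (A : tensor R n) (r : nat)
  : tensor R n :=
  match r with
  | 0 => A
  | r'.+1 => tmul m ((m.-1) ^ r + 1) A (tpow_aux m A r')
  end.

(* k-fold power A^k (k >= 1); order (m-1)^k + 1. *)
Definition tpow (R : realFieldType) (n m : nat) (A : tensor R n) (k : nat) :=
  tpow_aux m A k.-1.

Definition majmx (R : realFieldType) (n k : nat) (C : tensor R n) (i j : 'I_n) : R :=
  C (i :: nseq k.-1 j).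

Definition nonneg_tensor (R : realFieldType) (n m : nat) (A : tensor R n) :=
  forall s : seq 'I_n, size s = m -> 0 <= A s.

Definition pos_pow (R : realFieldType) (n m : nat) (A : tensor R n) (r : nat) :=
  forall i j : 'I_n, 0 < majmx ((m.-1) ^ r + 1) (tpow m A r) i j.

Definition primitive (R : realFieldType) (n m : nat) (A : tensor R n) :=
  exists r, (1 <= r)%N /\ pos_pow m A r.

Definition is_gamma (R : realFieldType) (n m : nat) (A : tensor R n) (r : nat) :=
  [/\ (1 <= r)%N, pos_pow m A r &
      forall r', (1 <= r')%N -> pos_pow m A r' -> (r <= r')%N].

Definition jpos_pow (R : realFieldType) (n m : nat) (A : tensor R n) (j : 'I_n)
    (k : nat) :=
  forall u : 'I_n, 0 < majmx ((m.-1) ^ k + 1) (tpow m A k) u j.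

Definition j_primitive (R : realFieldType) (n m : nat) (A : tensor R n) (j : 'I_n) :=
  exists k, (1 <= k)%N /\ jpos_pow m A j k.

Definition is_gamma_j (R : realFieldType) (n m : nat) (A : tensor R n) (j : 'I_n)
    (k : nat) :=
  [/\ (1 <= k)%N, jpos_pow m A j k &
      forall k', (1 <= k')%N -> jpos_pow m A j k' -> (k <= k')%N].

(* The order-(m+1) tensor B with b_{i_1..i_m i_{m+1}} = a_{i_1..i_m} if
   i_{m+1} = i_m and 0 otherwise (i_m, i_{m+1} are positions m-1, m). *)
Definition extend_tensor (R : realFieldType) (n m : nat) (A : tensor R n)
  : tensor R n :=
  fun s => if nth 0%N (map val s) m.-1 == nth 0%N (map val s) m
           then A (take m s) else 0.

(** The positivity pattern of the majorization matrix of A^(r+1) depends only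
    on the zero pattern of A: M(A^(r+2))_ij > 0 iff some a_{i i_2..i_m} > 0 has
    all of M(A^(r+1))_{i_l j} > 0.  The entries b_{i s y y} = a_{i s y} are the
    only positive entries of B, so B offers the same witnesses as A (with the
    last index doubled), and the positivity patterns of M(A^k) and M(B^k)
    coincide for every k >= 1.  Both equivalences and the equalities of
    exponents follow. *)

From mathcomp Require Import all_boot all_order all_algebra.
From mathcomp Require Import zify.
Import Order.TTheory GRing.Theory Num.Theory.
Local Open Scope ring_scope.

Set Implicit Arguments.
Unset Strict Implicit.
Unset Printing Implicit Defensive.

(* [majpow p X r] is M(X^(r+1)): shifted by one to avoid the predecessor in
   [tpow]. *)
Definition majpow (R : realFieldType) (n p : nat) (X : tensor R n) (r : nat)
    (i j : 'I_n) : R :=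
  tpow_aux p X r (i :: nseq (p.-1 ^ r.+1) j).

Lemma majmx_tpowE (R : realFieldType) (n p : nat) (X : tensor R n) (k : nat)
    (i j : 'I_n) :
  (0 < k)%N -> majmx ((p.-1) ^ k + 1) (tpow p X k) i j = majpow p X k.-1 i j.
Proof. by case: k => // k _; rewrite /majmx /tpow /majpow addn1. Qed.

(* The tail of the index of M(X^(r+2)) cuts into p-1 constant blocks, each of
   which is an index of M(X^(r+1)). *)
Lemma majpowS (R : realFieldType) (n p : nat) (X : tensor R n) (r : nat)
    (i j : 'I_n) :
  majpow p X r.+1 i j = \sum_(t : (p.-1).-tuple 'I_n)
     X (i :: t) * \prod_(l < p.-1) majpow p X r (tnth t l) j.
Proof.
rewrite /majpow /= /tmul; apply: eq_bigr => t _; congr (_ * _).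
apply: eq_bigr => l _; congr (tpow_aux _ _ _ (_ :: _)).
rewrite addn1 /= drop_nseq take_nseq //.
have := ltn_ord l; set q := (p.-1 ^ r.+1)%N; rewrite expnS -/q => lt_l.
rewrite -mulnBl -{1}(mul1n q) leq_mul2r; apply/orP; right; lia.
Qed.

Section MajorizationPositivity.

Variables (R : realFieldType) (n p : nat) (X : tensor R n).
Hypotheses (p_gt0 : (0 < p)%N) (X_ge0 : nonneg_tensor p X).

Lemma majpow_ge0 (r : nat) (i j : 'I_n) : 0 <= majpow p X r i j.
Proof.
elim: r i j => [|r IHr] i j.
  by apply: X_ge0; rewrite /= size_nseq expn1 prednK.
rewrite majpowS; apply: sumr_ge0 => t _; apply: mulr_ge0.
  by apply: X_ge0; rewrite /= size_tuple prednK.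
by apply: prodr_ge0 => l _; apply: IHr.
Qed.

Lemma majpowS_gt0P (r : nat) (i j : 'I_n) :
  reflect (exists2 s : seq 'I_n, size s = p.-1 &
             (0 < X (i :: s)) && all (fun x => 0 < majpow p X r x j) s)
          (0 < majpow p X r.+1 i j).
Proof.
have Xt_ge0 (t : (p.-1).-tuple 'I_n) : 0 <= X (i :: t).
  by apply: X_ge0; rewrite /= size_tuple prednK.
have prod_ge0 (t : (p.-1).-tuple 'I_n) :
    0 <= \prod_(l < p.-1) majpow p X r (tnth t l) j.
  by apply: prodr_ge0 => l _; apply: majpow_ge0.
have term_gt0 (t : (p.-1).-tuple 'I_n) :
    (0 < X (i :: t) * \prod_(l < p.-1) majpow p X r (tnth t l) j)
    = (0 < X (i :: t)) && all (fun x => 0 < majpow p X r x j) t.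
  rewrite !lt0r mulr_ge0 // Xt_ge0 mulf_eq0 negb_or !andbT; congr (_ && _).
  apply/prodf_neq0/all_tnthP => /= pos_t l.
    by rewrite lt0r majpow_ge0 andbT pos_t.
  by move=> _; move: (pos_t l); rewrite lt0r => /andP[].
rewrite majpowS lt0r sumr_ge0 ?andbT; last by move=> t _; apply: mulr_ge0.
rewrite psumr_neq0; last by move=> t _; apply: mulr_ge0.
apply: (iffP hasP) => [[t _ /= pos_t] | [s size_s pos_s]].
  by exists t; rewrite ?size_tuple -?term_gt0.
have /eqP size_s' := size_s.
by exists (Tuple size_s'); rewrite ?mem_index_enum // term_gt0.
Qed.

End MajorizationPositivity.

Section ExtendTensor.

Variables (R : realFieldType) (n m : nat) (A : tensor R n).
Hypotheses (m_ge2 : (2 <= m)%N) (A_ge0 : nonneg_tensor m A).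

Let B := extend_tensor m A.

Lemma extend_tensor_ge0 : nonneg_tensor m.+1 B.
Proof.
move=> s size_s; rewrite /B /extend_tensor; case: ifP => // _.
by apply: A_ge0; rewrite size_take size_s ltnSn.
Qed.

Lemma extend_tensorE (i y z : 'I_n) (s : seq 'I_n) : (size s).+2 = m ->
  B (i :: rcons (rcons s y) z) = if y == z then A (i :: rcons s y) else 0.
Proof.
move=> size_s; rewrite /B /extend_tensor -size_s /= !map_rcons !nth_rcons.
rewrite !size_rcons size_map ltnn ltnSn !eqxx /= -(size_rcons s y).
by rewrite -[rcons (rcons s y) z]cats1 take_size_cat // ltnn.
Qed.

Lemma majpow0_extend (i j : 'I_n) : majpow m.+1 B 0 i j = majpow m A 0 i j.
Proof.
have nseqS k : nseq k.+1 j = rcons (nseq k j) j by elim: k => //= k ->.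
rewrite /majpow !expn1 /=; case: m m_ge2 extend_tensorE => [|[|k]] // _ Bs.
by rewrite [nseq k.+2 j]nseqS [nseq k.+1 j]nseqS Bs ?size_nseq // eqxx.
Qed.

Lemma majpow_extend_gt0 (r : nat) (i j : 'I_n) :
  (0 < majpow m.+1 B r i j) = (0 < majpow m A r i j).
Proof.
have m_gt0 : (0 < m)%N by lia.
elim: r i j => [|r IHr] i j; first by rewrite majpow0_extend.
have pos_AB s : all (fun x => 0 < majpow m.+1 B r x j) s
              = all (fun x => 0 < majpow m A r x j) s.
  by apply: eq_all => x; rewrite /= IHr.
apply/(majpowS_gt0P (ltn0Sn m) extend_tensor_ge0)/(majpowS_gt0P m_gt0 A_ge0).
  case=> s; case/lastP: s => [|s z]; first by move=> /= /esym; lia.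
  case/lastP: s => [|s y]; first by move=> /= /esym; lia.
  rewrite !size_rcons /= => size_s /andP[].
  rewrite extend_tensorE //.
  case: eqP => [<- A_gt0 | _]; last by rewrite ltxx.
  rewrite pos_AB !all_rcons => /andP[_ pos_s].
  by exists (rcons s y); rewrite ?size_rcons ?A_gt0 ?all_rcons //; lia.
case=> s; case/lastP: s => [|s y]; first by move=> /= /esym; lia.
rewrite size_rcons => size_s /andP[A_gt0 pos_s].
exists (rcons (rcons s y) y); first by rewrite !size_rcons; lia.
rewrite extend_tensorE; last lia.
have /andP[pos_y _] :
    (0 < majpow m A r y j) && all (fun x => 0 < majpow m A r x j) s.
  by move: pos_s; rewrite all_rcons.
by rewrite eqxx A_gt0 pos_AB all_rcons pos_y pos_s.
Qed.

Lemma jpos_pow_extend (j : 'I_n) (k : nat) :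
  (1 <= k)%N -> jpos_pow m.+1 B j k <-> jpos_pow m A j k.
Proof.
move=> k_gt0; split=> pos u; move: (pos u);
  by rewrite !majmx_tpowE ?majpow_extend_gt0.
Qed.

Lemma pos_pow_extend (k : nat) :
  (1 <= k)%N -> pos_pow m.+1 B k <-> pos_pow m A k.
Proof.
move=> k_gt0; split=> pos u v; move: (pos u v);
  by rewrite !majmx_tpowE ?majpow_extend_gt0.
Qed.

End ExtendTensor.

Section LeastPositiveExponent.

Variables P Q : nat -> Prop.
Hypothesis PQ : forall k, (1 <= k)%N -> P k <-> Q k.

Lemma exists_pos_exponent_iff :
  (exists k, (1 <= k)%N /\ P k) <-> (exists k, (1 <= k)%N /\ Q k).
Proof. by split=> -[k [k_gt0 Hk]]; exists k; split=> //; apply/(PQ k_gt0). Qed.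

Lemma least_pos_exponent_iff (k : nat) :
  [/\ (1 <= k)%N, P k & forall k', (1 <= k')%N -> P k' -> (k <= k')%N] <->
  [/\ (1 <= k)%N, Q k & forall k', (1 <= k')%N -> Q k' -> (k <= k')%N].
Proof.
split=> -[k_gt0 Hk least]; split=> // [|k' k'_gt0 Hk'];
  by [apply/(PQ k_gt0) | apply: least => //; apply/(PQ k'_gt0)].
Qed.

End LeastPositiveExponent.

Theorem proposition4p9 (R : realFieldType) (n m : nat) (A : tensor R n) :
  (2 <= m)%N -> nonneg_tensor m A ->
  let B := extend_tensor m A in
  (forall j : 'I_n,
     (j_primitive m A j <-> j_primitive m.+1 B j) /\
     (j_primitive m A j ->
        forall k, is_gamma_j m.+1 B j k <-> is_gamma_j m A j k)) /\
  ((primitive m A <-> primitive m.+1 B) /\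
   (primitive m A -> forall r, is_gamma m.+1 B r <-> is_gamma m A r)).
Proof.
move=> m_ge2 A_ge0 B.
have jposE j := jpos_pow_extend m_ge2 A_ge0 j.
have posE := pos_pow_extend m_ge2 A_ge0.
split=> [j|]; split.
- exact: iff_sym (exists_pos_exponent_iff (jposE j)).
- by move=> _ k; apply: (least_pos_exponent_iff (jposE j)).
- exact: iff_sym (exists_pos_exponent_iff posE).
- by move=> _ r; apply: (least_pos_exponent_iff posE).
Qed.
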